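(* For every base $\mathscr{B}$ and every IPL formula $\theta$: $\Vdash^{*}_{\mathscr{B}}\theta$ if and only if $\Vdash_{\mathscr{B}}\theta$.
   Context: Fix a denumerable set $\mathbb{A}$ of atoms. IPL formulas are built from atoms and $\bot$ using $\wedge,\vee,\to$. An atomic rule has the form $(Q_1\triangleright q_1,\dots,Q_n\triangleright q_n)\Rightarrow q$ with $n\ge 0$, $q,q_i\in\mathbb{A}$ and $Q_i$ finite (possibly empty) sets of atoms. A base is a set of atomic rules. Derivability $\vdash_{\mathscr{B}}$ is the least relation such that $S\cup\{q\}\vdash_{\mathscr{B}} q$, and if $(Q_1\triangleright q_1,\dots,Q_n\triangleright q_n)\Rightarrow q\in\mathscr{B}$ and $S\cup Q_i\vdash_{\mathscr{B}} q_i$ for all $i$, then $S\vdash_{\mathscr{B}} q$. Sandqvist's support $\Vdash_{\mathscr{B}}$ is defined inductively by: (At) $\Vdash_{\mathscr{B}} p$ iff $\emptyset\vdash_{\mathscr{B}} p$; ($\to$) $\Vdash_{\mathscr{B}}\varphi\to\psi$ iff $\varphi\Vdash_{\mathscr{B}}\psi$; ($\wedge$) $\Vdash_{\mathscr{B}}\varphi\wedge\psi$ iff $\Vdash_{\mathscr{B}}\varphi$ and $\Vdash_{\mathscr{B}}\psi$; ($\vee$) $\Vdash_{\mathscr{B}}\varphi\vee\psi$ iff for every $\mathscr{C}\supseteq\mathscr{B}$ and atom $p$, if $\varphi\Vdash_{\mathscr{C}}p$ and $\psi\Vdash_{\mathscr{C}}p$ then $\Vdash_{\mathscr{C}}p$;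 ($\bot$) $\Vdash_{\mathscr{B}}\bot$ iff $\Vdash_{\mathscr{B}}p$ for all atoms $p$; (Inf) for nonempty finite $\Gamma$, $\Gamma\Vdash_{\mathscr{B}}\varphi$ iff for every $\mathscr{C}\supseteq\mathscr{B}$, if $\Vdash_{\mathscr{C}}\psi$ for all $\psi\in\Gamma$ then $\Vdash_{\mathscr{C}}\varphi$. The relation $\Vdash^{*}_{\mathscr{B}}$ is defined by the same clauses except that ($\wedge$) is replaced by ($\wedge^*$): $\Vdash^{*}_{\mathscr{B}}\varphi\wedge\psi$ iff for every $\mathscr{C}\supseteq\mathscr{B}$ and every atom $p$, if $\varphi,\psi\Vdash^{*}_{\mathscr{C}}p$ then $\Vdash^{*}_{\mathscr{C}}p$. *)

From Stdlib Require Import List.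
Import ListNotations.

Definition atom := nat.

Inductive formula : Type :=
| At  : atom -> formula
| Bot : formula
| And : formula -> formula -> formula
| Or  : formula -> formula -> formula
| Imp : formula -> formula -> formula.

(* Atomic rule (Q_1 |> q_1, ..., Q_n |> q_n) => q :
   a list of premises (finite set Q_i given as a list, and atom q_i), and a conclusion. *)
Definition rule : Type := (list (list atom * atom) * atom)%type.

Definition base : Type := rule -> Prop.

Definition base_sub (B C : base) : Prop := forall r, B r -> C r.

Inductive deriv (B : base) : list atom -> atom -> Prop :=
| deriv_ax : forall S q, In q S -> deriv B S q
| deriv_rule : forall S (prems : list (list atom * atom)) q,
    B (prems, q) ->
    (forall Qi qi, In (Qi, qi) prems -> deriv B (Qi ++ S) qi) ->
    deriv B S q.

(* Sandqvist's support  ||-_B phi  (Inf clause inlined for singleton contexts). *)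
Fixpoint supp (B : base) (phi : formula) {struct phi} : Prop :=
  match phi with
  | At p => deriv B [] p
  | Bot => forall p, deriv B [] p
  | And a b => supp B a /\ supp B b
  | Or a b => forall C, base_sub B C -> forall p : atom,
      (forall D, base_sub C D -> supp D a -> deriv D [] p) ->
      (forall D, base_sub C D -> supp D b -> deriv D [] p) ->
      deriv C [] p
  | Imp a b => forall C, base_sub B C -> supp C a -> supp C b
  end.

Fixpoint supp_star (B : base) (phi : formula) {struct phi} : Prop :=
  match phi with
  | At p => deriv B [] p
  | Bot => forall p, deriv B [] p
  | And a b => forall C, base_sub B C -> forall p : atom,
      (forall D, base_sub C D -> supp_star D a -> supp_star D b -> deriv D [] p) ->
      deriv C [] p
  | Or a b => forall C, base_sub B C -> forall p : atom,
      (forall D, base_sub C D -> supp_star D a -> deriv D [] p) ->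
      (forall D, base_sub C D -> supp_star D b -> deriv D [] p) ->
      deriv C [] p
  | Imp a b => forall C, base_sub B C -> supp_star C a -> supp_star C b
  end.

From Stdlib Require Import List.
Import ListNotations.

(* The proof is by induction on the formula; the only non-trivial case is
   conjunction, where the starred clause is an elimination-style clause
   ("every atom derivable from both conjuncts in every extension is
   derivable") while the standard clause is the plain pairing.
   Two general facts about standard support carry this case:
   - monotonicity: support persists along base extensions (from the
     monotonicity of derivability), which gives pairing => starred clause;
   - atomic elimination: if every atom that follows from phi in all
     extensions of C is derivable in C (for all C extending B), then phi is
     supported in B; this gives starred clause => pairing.
   The disjunction and implication clauses have the same shape in both
   relations, so those cases only transport the induction hypotheses. *)

Lemma base_sub_refl (B : base) : base_sub B B.
Proof. intros r Hr; exact Hr. Qed.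

Lemma base_sub_trans (B C D : base) :
  base_sub B C -> base_sub C D -> base_sub B D.
Proof. intros HBC HCD r Hr; apply HCD, HBC, Hr. Qed.

Lemma deriv_mono (B C : base) (S : list atom) (q : atom) :
  base_sub B C -> deriv B S q -> deriv C S q.
Proof.
  intros HBC H; induction H.
  - apply deriv_ax; assumption.
  - eapply deriv_rule; eauto.
Qed.

Lemma supp_mono (phi : formula) :
  forall B C, base_sub B C -> supp B phi -> supp C phi.
Proof.
  induction phi; simpl; intros B C HBC H.
  - eapply deriv_mono; eauto.
  - intro p; eapply deriv_mono; eauto.
  - destruct H; split; eauto.
  - intros C' HC'; apply H, (base_sub_trans _ _ _ HBC HC').
  - intros C' HC'; apply H, (base_sub_trans _ _ _ HBC HC').
Qed.

Lemma supp_of_atomic_elim (phi : formula) : forall B,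
  (forall C, base_sub B C -> forall p,
     (forall D, base_sub C D -> supp D phi -> deriv D [] p) -> deriv C [] p) ->
  supp B phi.
Proof.
  induction phi as [a| |phi1 IH1 phi2 IH2|phi1 IH1 phi2 IH2|phi1 IH1 phi2 IH2];
    simpl; intros B H.
  - apply (H B (base_sub_refl B) a); auto.
  - intro p; apply (H B (base_sub_refl B) p); auto.
  - split.
    + apply IH1; intros C HC p Hp; apply H; auto; intros D HD [H1 _]; auto.
    + apply IH2; intros C HC p Hp; apply H; auto; intros D HD [_ H2]; auto.
  - intros C HC p Hp1 Hp2; apply H; auto; intros D HD Hor.
    apply (Hor D (base_sub_refl D) p).
    + intros D' HD'; apply Hp1, (base_sub_trans _ _ _ HD HD').
    + intros D' HD'; apply Hp2, (base_sub_trans _ _ _ HD HD').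
  - intros C HC H1; apply IH2; intros C' HC' p Hp.
    apply H; [exact (base_sub_trans _ _ _ HC HC')|].
    intros D HD Himp; apply Hp; auto; apply Himp; [apply base_sub_refl|].
    apply (supp_mono phi1 C); [exact (base_sub_trans _ _ _ HC' HD)|exact H1].
Qed.

Section Clauses.
Variables a b : formula.
Hypothesis IHa : forall B, supp_star B a <-> supp B a.
Hypothesis IHb : forall B, supp_star B b <-> supp B b.

Lemma supp_star_and_iff (B : base) :
  supp_star B (And a b) <-> supp B (And a b).
Proof.
  simpl; split.
  - intro H; split; apply supp_of_atomic_elim; intros C HC p Hp;
      apply H; auto; intros D HD Ha Hb; apply Hp; auto.
    + apply IHa; exact Ha.
    + apply IHb; exact Hb.
  - intros [Ha Hb] C HC p Hp; apply Hp; [apply base_sub_refl| |].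
    + apply IHa, (supp_mono a B); assumption.
    + apply IHb, (supp_mono b B); assumption.
Qed.

Lemma supp_star_or_iff (B : base) :
  supp_star B (Or a b) <-> supp B (Or a b).
Proof.
  simpl; split; intros H C HC p Hp1 Hp2; apply H; auto;
    intros D HD X; [apply Hp1|apply Hp2|apply Hp1|apply Hp2]; auto;
    first [apply IHa | apply IHb]; exact X.
Qed.

Lemma supp_star_imp_iff (B : base) :
  supp_star B (Imp a b) <-> supp B (Imp a b).
Proof.
  simpl; split; intros H C HC X; apply IHb, H, IHa; auto.
Qed.
End Clauses.

Theorem mainTheorem2 (B : base) (theta : formula) :
  supp_star B theta <-> supp B theta.
Proof.
  revert B; induction theta; intro B.
  - reflexivity.
  - reflexivity.
  - apply supp_star_and_iff; assumption.
  - apply supp_star_or_iff; assumption.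
  - apply supp_star_imp_iff; assumption.
Qed.
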